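(* Let $m$ be an even positive integer. The collection of right cosets $\{\Gamma_0(2)^+\gamma:\gamma\in M_1^m\}$ is closed under right multiplication by elements of $\Gamma_0(2)$: for every $\gamma\in M_1^m$ and $\delta\in\Gamma_0(2)$ there is $\gamma'\in M_1^m$ with $\Gamma_0(2)^+\gamma\delta=\Gamma_0(2)^+\gamma'$.
   Context: Matrices are in $GL_2^+(\mathbb{R})$ considered up to sign; $\Gamma_0(2)=\{\begin{bmatrix}a&b\\c&d\end{bmatrix}\in SL_2(\mathbb{Z}): c\equiv0\pmod 2\}$, $w_2=2^{-1/2}\begin{bmatrix}0&-1\\2&0\end{bmatrix}$, $\Gamma_0(2)^+$ is the group generated by $\Gamma_0(2)$ and $w_2$. $M_1^m=\{\begin{bmatrix}x&y\\0&z\end{bmatrix}: x,y,z\in\mathbb{Z},\ x,z>0,\ xz=m,\ 0\leq y<z,\ \gcd(x,y,z)=1,\ x\text{ odd}\}$. *)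

From HB Require Import structures.
From mathcomp Require Import all_boot all_order all_algebra.
From mathcomp Require Import reals.
Set Implicit Arguments. Unset Strict Implicit. Unset Printing Implicit Defensive.
Import Order.TTheory GRing.Theory Num.Theory.
Local Open Scope ring_scope.

Definition mx2 (R : nzRingType) (a b c d : R) : 'M[R]_2 :=
  \matrix_(i < 2, j < 2)
    if i == 0 then (if j == 0 then a else b) else (if j == 0 then c else d).

Definition Gamma0_2 (R : realType) (A : 'M[R]_2) : Prop :=
  exists a b c d : int,
    [/\ A = mx2 a%:~R b%:~R c%:~R d%:~R, a * d - b * c = 1 & (2 %| c)%Z].

Definition w2 (R : realType) : 'M[R]_2 :=
  (Num.sqrt (2 : R))^-1 *: mx2 0 (-1) 2 0.

Inductive Gamma0_2plus (R : realType) : 'M[R]_2 -> Prop :=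
| G0p_gen A : Gamma0_2 A -> Gamma0_2plus A
| G0p_w2 : Gamma0_2plus (w2 R)
| G0p_mul A B : Gamma0_2plus A -> Gamma0_2plus B -> Gamma0_2plus (A *m B)
| G0p_inv A : Gamma0_2plus A -> Gamma0_2plus (invmx A).

(* membership of X in the right coset G g, matrices considered up to sign *)
Definition in_rcoset (R : realType) (G : 'M[R]_2 -> Prop) (g X : 'M[R]_2) : Prop :=
  exists h, G h /\ (X = h *m g \/ X = - (h *m g)).

Definition M1 (R : realType) (m : nat) (g : 'M[R]_2) : Prop :=
  exists x y z : nat,
    [/\ (0 < x)%N, (0 < z)%N, (x * z)%N = m & (y < z)%N] /\
    [/\ gcdn (gcdn x y) z = 1%N, odd x & g = mx2 x%:R y%:R 0 z%:R].

From HB Require Import structures.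
From mathcomp Require Import all_boot all_order all_algebra.
From mathcomp Require Import reals zify ring.
Import Order.TTheory GRing.Theory Num.Theory.
Local Open Scope ring_scope.

(* Write gamma * delta = M, an integer matrix of determinant m whose upper-left
   entry a is odd (x is odd, and delta is congruent mod 2 to an upper triangular
   matrix with odd diagonal) and whose lower-left entry c is even.  Left
   multiplication by SL_2(Z) brings M to the Hermite form [e y; 0 z] with
   e = gcd(a, c) and 0 <= y < z; the unimodular factor has lower-left entry
   c / e, which is even because e | a is odd, so it lies in Gamma_0(2).  The gcd
   of the entries is unchanged by unimodular factors, so [e y; 0 z] is again in
   M_1^m. *)

Section Mx2.
Variable R : comNzRingType.
Implicit Types a b c d : R.

Lemma mx2_eta (A : 'M[R]_2) : A = mx2 (A 0 0) (A 0 1) (A 1 0) (A 1 1).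
Proof.
apply/matrixP => i j; rewrite !mxE.
by case: i => [[|[|i]] Hi]; case: j => [[|[|j]] Hj] //=; congr (A _ _); apply: val_inj.
Qed.

Lemma mx2_mul a b c d (a' b' c' d' : R) :
  mx2 a b c d *m mx2 a' b' c' d' =
  mx2 (a * a' + b * c') (a * b' + b * d') (c * a' + d * c') (c * b' + d * d').
Proof.
apply/matrixP => i j; rewrite !mxE !big_ord_recl big_ord0 !mxE /=.
by case: i => [[|[|i]] Hi]; case: j => [[|[|j]] Hj] //=; rewrite addr0.
Qed.

Lemma det_mx2 a b c d : \det (mx2 a b c d) = a * d - b * c.
Proof.
rewrite (expand_det_row _ 0) !big_ord_recl big_ord0 /cofactor !mxE /=.
by rewrite !det_mx11 !mxE /= addr0 expr0 expr1 mul1r mulN1r mulrN.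
Qed.

Lemma map_mx2 (S : comNzRingType) (f : R -> S) a b c d :
  map_mx f (mx2 a b c d) = mx2 (f a) (f b) (f c) (f d).
Proof.
by apply/matrixP => i j; rewrite !mxE; case: (i == 0); case: (j == 0).
Qed.

End Mx2.

Lemma mx2_triangularize (a b c d : int) : gcdz a c != 0 ->
  exists2 g : 'M[int]_2, \det g = 1 &
    exists b' d', mx2 a b c d = g *m mx2 (gcdz a c) b' 0 d'.
Proof.
move=> e_neq0; have [u [v uv_e]] := Bezoutz a c.
have /dvdzP [a1 a_e] := dvdz_gcdl a c.
have /dvdzP [c1 c_e] := dvdz_gcdr a c.
move: (gcdz a c) e_neq0 uv_e a_e c_e => e e_neq0 uv_e a_e c_e.
have uv1 : u * a1 + v * c1 = 1.
  by apply: (mulIf e_neq0); rewrite mul1r -[in RHS]uv_e a_e c_e; ring.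
exists (mx2 a1 (- v) c1 u); first by rewrite det_mx2 -uv1; ring.
exists (u * b + v * d), (a1 * d - c1 * b).
rewrite mx2_mul -a_e -c_e; congr mx2; rewrite ?mulr0 ?addr0 // -[LHS]mulr1 -uv1; ring.
Qed.

Lemma mx2_upper_divz (e b z : int) :
  mx2 e b 0 z = mx2 1 (b %/ z)%Z 0 1 *m mx2 e (b %% z)%Z 0 z.
Proof. by rewrite mx2_mul {1}(divz_eq b z); congr mx2; ring. Qed.

Lemma mx2_Hermite {a b c d : int} : 0 < \det (mx2 a b c d) ->
  exists2 g : 'M[int]_2, \det g = 1 &
    exists y z : nat, (y < z)%N /\ mx2 a b c d = g *m mx2 (gcdz a c) y%:Z 0 z%:Z.
Proof.
rewrite det_mx2 => det_gt0.
have e_neq0 : gcdz a c != 0.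
  rewrite gcdz_eq0; apply: contraTN det_gt0 => /andP[/eqP-> /eqP->].
  by rewrite !mul0r mulr0 subrr.
have [g det_g [b' [z E]]] := mx2_triangularize a b c d e_neq0.
have z_gt0 : 0 < z.
  have := congr1 determinant E; rewrite det_mulmx det_g mul1r !det_mx2 => detE.
  have : 0 <= gcdz a c by [].
  by move: det_gt0 e_neq0; rewrite detE; nia.
exists (g *m mx2 1 (b' %/ z)%Z 0 1); first by rewrite det_mulmx det_g det_mx2; ring.
have b'z_ge0 : 0 <= (b' %% z)%Z by rewrite modz_ge0 ?gt_eqF.
have z_ge0 := ltW z_gt0.
exists `|(b' %% z)%Z|%N, `|z|%N; rewrite !gez0_abs //; split.
  by rewrite -ltz_nat !gez0_abs // ltz_pmod.
by rewrite -mulmxA -mx2_upper_divz.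
Qed.

Lemma Euclid_dvdzM (p : nat) (m n : int) : prime p ->
  (p %| m * n)%Z = (p %| m)%Z || (p %| n)%Z.
Proof. by move=> p_pr; rewrite !dvdzE abszM Euclid_dvdM. Qed.

Definition Gamma0_2z (g : 'M[int]_2) : Prop := \det g = 1 /\ (2 %| g 1%R 0%R)%Z.

Lemma Gamma0_2_Hermite {a b c d : int} :
  ~~ (2 %| a)%Z -> (2 %| c)%Z -> 0 < \det (mx2 a b c d) ->
  exists g : 'M[int]_2, exists y z : nat,
    [/\ Gamma0_2z g, (y < z)%N, ~~ (2 %| gcdz a c)%Z
      & mx2 a b c d = g *m mx2 (gcdz a c) y%:Z 0 z%:Z].
Proof.
move=> a_odd c_even det_gt0.
have [g det_g [y [z [y_lt_z E]]]] := mx2_Hermite det_gt0.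
have e_odd : ~~ (2 %| gcdz a c)%Z.
  by apply: contra a_odd => /dvdz_trans; apply; apply: dvdz_gcdl.
have c_eq : c = g 1 0 * gcdz a c.
  have := congr1 (fun A : 'M[int]_2 => A 1%R 0%R) E.
  by rewrite !mxE !big_ord_recl big_ord0 !mxE /= mulr0 !addr0.
exists g, y, z; split => //; split => //.
by move: c_even; rewrite c_eq Euclid_dvdzM // (negbTE e_odd) orbF.
Qed.

Definition dvdmx (k : int) {m n : nat} (A : 'M[int]_(m, n)) : Prop :=
  forall i j, (k %| A i j)%Z.

Lemma dvdmx_mull {k : int} {m n p : nat} (A : 'M[int]_(m, n)) (B : 'M[int]_(n, p)) :
  dvdmx k B -> dvdmx k (A *m B).
Proof. by move=> kB i j; rewrite mxE; apply: rpred_sum => l _; apply: dvdz_mull. Qed.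

Lemma dvdmx_mulr {k : int} {m n p : nat} (A : 'M[int]_(m, n)) (B : 'M[int]_(n, p)) :
  dvdmx k A -> dvdmx k (A *m B).
Proof. by move=> kA i j; rewrite mxE; apply: rpred_sum => l _; apply: dvdz_mulr. Qed.

Lemma dvdmx_unimodular {k : int} {m n : nat} (A : 'M[int]_(m, n)) (B : 'M[int]_n) :
  \det B = 1 -> dvdmx k (A *m B) -> dvdmx k A.
Proof.
move=> det_B /(dvdmx_mulr _ (\adj B)).
by rewrite -mulmxA mul_mx_adj det_B mulmx1.
Qed.

Lemma dvdmx_mx2 k (a b c d : int) :
  dvdmx k (mx2 a b c d) <-> [/\ (k %| a)%Z, (k %| b)%Z, (k %| c)%Z & (k %| d)%Z].
Proof.
split=> [kM | [ka kb kc kd] i j].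
  by split; [move: (kM 0 0) | move: (kM 0 1) | move: (kM 1 0) | move: (kM 1 1)];
    rewrite mxE.
by rewrite mxE; case: (i == 0); case: (j == 0).
Qed.

Lemma gcdn_upper_eq1_mul (x y z e y' z' : nat) (g δ : 'M[int]_2) :
  \det δ = 1 -> mx2 x%:Z y%:Z 0 z%:Z *m δ = g *m mx2 e%:Z y'%:Z 0 z'%:Z ->
  gcdn (gcdn x y) z = 1%N -> gcdn (gcdn e y') z' = 1%N.
Proof.
move=> det_δ E gcd_xyz; set k := gcdn (gcdn e y') z'.
have k_upper : dvdmx k%:Z (mx2 e%:Z y'%:Z 0 z'%:Z).
  apply/dvdmx_mx2; rewrite !dvdzE /= dvdn0 /k dvdn_gcdr.
  by split=> //; [exact: dvdn_trans (dvdn_gcdl _ _) (dvdn_gcdl _ _)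
                 | exact: dvdn_trans (dvdn_gcdl _ _) (dvdn_gcdr _ _)].
have /dvdmx_mx2 [kx ky _ kz] : dvdmx k%:Z (mx2 x%:Z y%:Z 0 z%:Z).
  by apply: (dvdmx_unimodular _ _ det_δ); rewrite E; apply: dvdmx_mull.
apply/eqP; rewrite -dvdn1 -gcd_xyz !dvdn_gcd.
by move: kx ky kz; rewrite !dvdzE => -> -> ->.
Qed.

Definition M1_entries (m x y z : nat) : Prop :=
  [/\ (0 < x)%N, (0 < z)%N, (x * z)%N = m & (y < z)%N] /\
  gcdn (gcdn x y) z = 1%N /\ odd x.

Lemma M1_entries_Gamma0_2_mul {m x y z : nat} {δ : 'M[int]_2} :
  M1_entries m x y z -> Gamma0_2z δ ->
  exists g : 'M[int]_2, exists e y' z' : nat,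
    [/\ Gamma0_2z g, M1_entries m e y' z'
      & mx2 x%:Z y%:Z 0 z%:Z *m δ = g *m mx2 e%:Z y'%:Z 0 z'%:Z].
Proof.
move=> [[x_gt0 z_gt0 xz_m y_lt_z] [gcd_xyz x_odd]] [det_δ δ10_even].
have [p [q [r [s Eδ]]]] : exists p q r s, δ = mx2 p q r s.
  by exists (δ 0 0), (δ 0 1), (δ 1 0), (δ 1 1); exact: mx2_eta.
subst δ; have det_pqrs : p * s - q * r = 1 by rewrite -det_mx2.
have r_even : (2 %| r)%Z by move: δ10_even; rewrite mxE.
have p_odd : ~~ (2 %| p)%Z.
  apply/negP => p_even; suff : (2 %| p * s - q * r)%Z by rewrite det_pqrs.
  by apply: rpredB; [apply: dvdz_mulr | apply: dvdz_mull].
have a_odd : ~~ (2 %| x%:Z * p + y%:Z * r)%Z.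
  rewrite rpredDr; last exact: dvdz_mull.
  by rewrite Euclid_dvdzM // negb_or p_odd dvdzE /= dvdn2 x_odd.
have E_M : mx2 x%:Z y%:Z 0 z%:Z *m mx2 p q r s =
           mx2 (x%:Z * p + y%:Z * r) (x%:Z * q + y%:Z * s) (z%:Z * r) (z%:Z * s).
  by rewrite mx2_mul !mul0r !add0r.
have det_M : \det (mx2 x%:Z y%:Z 0 z%:Z *m mx2 p q r s) = m%:Z.
  by rewrite det_mulmx det_δ det_mx2 mulr0 subr0 mulr1 -xz_m.
have m_gt0 : (0 < m)%N by rewrite -xz_m muln_gt0 x_gt0.
have det_gt0 : 0 < \det (mx2 x%:Z y%:Z 0 z%:Z *m mx2 p q r s).
  by rewrite det_M ltz_nat.
rewrite E_M in det_gt0.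
have [g [y' [z' [g_G0 y'_lt_z' e_odd E]]]] :=
  Gamma0_2_Hermite a_odd (dvdz_mull _ r_even) det_gt0.
move: E e_odd; rewrite -E_M /gcdz; set e := gcdn _ _ => E e_odd.
have ez_m : (e * z')%N = m.
  apply/eqP; rewrite -eqz_nat -det_M E det_mulmx g_G0.1 mul1r det_mx2.
  by rewrite mulr0 subr0.
move: m_gt0; rewrite -ez_m muln_gt0 => /andP[e_gt0 z'_gt0].
exists g, e, y', z'; split=> //; split; first by [].
split; first exact: gcdn_upper_eq1_mul det_δ E gcd_xyz.
by move: e_odd; rewrite dvdzE /= dvdn2 negbK.
Qed.

Section RightCosets.
Variables (R : realType) (G : 'M[R]_2 -> Prop).
Hypothesis G_mul : forall A B, G A -> G B -> G (A *m B).

Lemma in_rcoset_mulmxl (g h X : 'M[R]_2) :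
  g \in unitmx -> G g -> G (invmx g) ->
  in_rcoset G (g *m h) X <-> in_rcoset G h X.
Proof.
move=> g_unit Gg Gg'; split=> [[k [Gk E]] | [k [Gk E]]].
  by exists (k *m g); rewrite mulmxA in E; split; [exact: G_mul | ].
exists (k *m invmx g); split; first exact: G_mul.
by rewrite -mulmxA (mulmxA (invmx g)) mulVmx // mul1mx.
Qed.

End RightCosets.

Lemma Gamma0_2_unit (R : realType) (g : 'M[R]_2) : Gamma0_2 g -> g \in unitmx.
Proof.
case=> [a [b [c [d [-> det1 _]]]]].
by rewrite unitmxE det_mx2 -!intrM -intrB det1 unitr1.
Qed.

Lemma Gamma0_2plus_rcoset_mulmxl (R : realType) (g h X : 'M[R]_2) :
  Gamma0_2 g ->
  in_rcoset (@Gamma0_2plus R) (g *m h) X <-> in_rcoset (@Gamma0_2plus R) h X.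
Proof.
move=> Gg; apply: in_rcoset_mulmxl; first exact: G0p_mul.
- exact: Gamma0_2_unit.
- exact: G0p_gen.
- exact/G0p_inv/G0p_gen.
Qed.

Lemma Gamma0_2_intr (R : realType) (g : 'M[int]_2) :
  Gamma0_2z g -> Gamma0_2 (map_mx intr g : 'M[R]_2).
Proof.
case=> det_g g10_even; exists (g 0 0), (g 0 1), (g 1 0), (g 1 1); split=> //.
  by rewrite {1}[g]mx2_eta map_mx2.
by rewrite -det_mx2 -mx2_eta.
Qed.

Lemma Gamma0_2_lift {R : realType} {δ : 'M[R]_2} :
  Gamma0_2 δ -> exists2 d : 'M[int]_2, Gamma0_2z d & δ = map_mx intr d.
Proof.
case=> [p [q [r [s [-> det_pqrs r_even]]]]]; exists (mx2 p q r s).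
  by split; rewrite ?det_mx2 ?mxE.
by rewrite map_mx2.
Qed.

Lemma M1_lift {R : realType} {m : nat} {γ : 'M[R]_2} : M1 m γ ->
  exists x y z : nat,
    M1_entries m x y z /\ γ = map_mx intr (mx2 x%:Z y%:Z 0 z%:Z).
Proof.
case=> [x [y [z [xyz [gcd_xyz x_odd ->]]]]].
by exists x, y, z; split; last rewrite map_mx2.
Qed.

Lemma M1_intr (R : realType) (m x y z : nat) : M1_entries m x y z ->
  M1 m (map_mx intr (mx2 x%:Z y%:Z 0 z%:Z) : 'M[R]_2).
Proof.
case=> xyz [gcd_xyz x_odd].
by exists x, y, z; split=> //; split; last rewrite map_mx2.
Qed.

Theorem lemma2p4 (R : realType) (m : nat) (m_gt0 : (0 < m)%N) (m_even : ~~ odd m)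
    (gamma delta : 'M[R]_2) (hgamma : M1 m gamma) (hdelta : Gamma0_2 delta) :
  exists gamma' : 'M[R]_2, M1 m gamma' /\
    forall X : 'M[R]_2,
      in_rcoset (@Gamma0_2plus R) (gamma *m delta) X <->
      in_rcoset (@Gamma0_2plus R) gamma' X.
Proof.
have [x [y [z [xyz ->]]]] := M1_lift hgamma.
have [d d_G0 ->] := Gamma0_2_lift hdelta.
have [g [e [y' [z' [g_G0 eyz E]]]]] := M1_entries_Gamma0_2_mul xyz d_G0.
exists (map_mx intr (mx2 e%:Z y'%:Z 0 z'%:Z)); split; first exact: M1_intr.
move=> X; rewrite -map_mxM E map_mxM.
exact/Gamma0_2plus_rcoset_mulmxl/Gamma0_2_intr.
Qed.
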